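(* Let $\mathcal{X}$ be a finite set, $\pi$ a probability mass function on $\mathcal{X}$ with full support, and $P$ a $\pi$-stationary transition matrix on $\mathcal{X}$. Let a group $\mathcal{G}$ act on $\mathcal{X}$ with orbits $\mathcal{O}_1,\dots,\mathcal{O}_k$, and let $G$ be the associated Gibbs orbit kernel. Then the projection chains of $GPG$ and of $P$ induced by the partition $(\mathcal{O}_i)_{i=1}^k$ coincide: $\overline{GPG}=\overline{P}$.
   Context: The Gibbs orbit kernel is $G(x,y)=\pi(y)/\pi(\mathcal{O}(x))$ if $y$ lies in the orbit $\mathcal{O}(x)$ of $x$, and $0$ otherwise, where $\pi(A)=\sum_{z\in A}\pi(z)$. For a transition matrix $K$ on $\mathcal{X}$, its projection chain induced by $(\mathcal{O}_i)_{i=1}^k$ is the $k\times k$ matrix $\overline{K}(i,j)=\frac{1}{\pi(\mathcal{O}_i)}\sum_{x\in\mathcal{O}_i,\,y\in\mathcal{O}_j}\pi(x)K(x,y)$. *)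

From HB Require Import structures.
From mathcomp Require Import all_boot all_order all_algebra all_fingroup.
Set Implicit Arguments. Unset Strict Implicit. Unset Printing Implicit Defensive.
Import Order.TTheory GRing.Theory Num.Theory.
Local Open Scope ring_scope.

Definition massOf (R : realFieldType) (X : finType) (pi : X -> R) (A : {set X}) : R :=
  \sum_(z in A) pi z.

Definition full_pmf (R : realFieldType) (X : finType) (pi : X -> R) : Prop :=
  (forall x, 0 < pi x) /\ \sum_(x : X) pi x = 1.

Definition stochastic (R : realFieldType) (X : finType) (K : X -> X -> R) : Prop :=
  (forall x y, 0 <= K x y) /\ (forall x, \sum_(y : X) K x y = 1).

Definition stationary (R : realFieldType) (X : finType) (pi : X -> R)
  (K : X -> X -> R) : Prop :=
  forall y, \sum_(x : X) pi x * K x y = pi y.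

Definition kcomp (R : realFieldType) (X : finType) (K L : X -> X -> R) : X -> X -> R :=
  fun x z => \sum_(y : X) K x y * L y z.

Definition gorbit (gT : finGroupType) (X : finType) (to : {action gT &-> X}) (x : X)
  : {set X} := orbit to [set: gT] x.

Definition orbits_of (gT : finGroupType) (X : finType) (to : {action gT &-> X})
  : {set {set X}} := [set gorbit to x | x : X].

Definition gibbs_orbit_kernel (R : realFieldType) (gT : finGroupType) (X : finType)
  (to : {action gT &-> X}) (pi : X -> R) : X -> X -> R :=
  fun x y => if y \in gorbit to x then pi y / massOf pi (gorbit to x) else 0.

Definition proj_chain (R : realFieldType) (X : finType) (pi : X -> R)
  (K : X -> X -> R) (Oi Oj : {set X}) : R :=
  (massOf pi Oi)^-1 * \sum_(x in Oi) \sum_(y in Oj) pi x * K x y.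

From HB Require Import structures.
From mathcomp Require Import all_boot all_order all_algebra all_fingroup.
Import Order.TTheory GRing.Theory Num.Theory.
Local Open Scope ring_scope.

(* Pushing [pi] restricted to an orbit through [G] gives back [pi] restricted
   to that orbit, and [G] keeps every state inside its own orbit.  So in
   the sum of [pi(x) (G P G)(x, y)] over x in O_i and y in O_j the two copies
   of [G] are absorbed, leaving the same double sum for [P]. *)

Section KernelSums.

Variables (R : realFieldType) (X : finType).
Implicit Types (w : X -> R) (K L : X -> X -> R) (A B : {set X}).

Lemma sum_weighted_kcomp w K L A z :
  \sum_(x in A) w x * kcomp K L x z = \sum_y (\sum_(x in A) w x * K x y) * L y z.
Proof.
under eq_bigr => x _ do rewrite /kcomp mulr_sumr.
rewrite exchange_big; apply: eq_bigr => y _.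
by rewrite mulr_suml; apply: eq_bigr => x _; rewrite mulrA.
Qed.

Lemma sum_block_kcomp w K L A B :
  \sum_(x in A) \sum_(y in B) w x * kcomp K L x y
  = \sum_u (\sum_(x in A) w x * K x u) * \sum_(y in B) L u y.
Proof.
rewrite exchange_big /=; under eq_bigr => y _ do rewrite sum_weighted_kcomp.
by rewrite exchange_big; apply: eq_bigr => u _; rewrite mulr_sumr.
Qed.

End KernelSums.

Section GibbsOrbitKernel.

Variables (R : realFieldType) (gT : finGroupType) (X : finType).
Variables (to : {action gT &-> X}) (pi : X -> R).
Hypothesis pi_gt0 : forall x, 0 < pi x.
Variable O : {set X}.
Hypothesis O_orbit : O \in orbits_of to.

Lemma gorbit_orbits_of x : x \in O -> gorbit to x = O.
Proof. by case/imsetP: O_orbit => z _ -> x_z; apply/orbit_eqP. Qed.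

Lemma massOf_orbit_neq0 : massOf pi O != 0.
Proof.
case/imsetP: O_orbit => z _ ->; rewrite /massOf (bigD1 z) ?orbit_refl //=.
rewrite lt0r_neq0 // ltr_pwDl // sumr_ge0 // => x _; exact: ltW.
Qed.

Lemma gibbs_orbit_kernel_orbit x y : x \in O ->
  gibbs_orbit_kernel to pi x y = if y \in O then pi y / massOf pi O else 0.
Proof. by move=> x_O; rewrite /gibbs_orbit_kernel gorbit_orbits_of. Qed.

Lemma gibbs_orbit_kernel_into_orbit x y : x \notin O -> y \in O ->
  gibbs_orbit_kernel to pi x y = 0.
Proof.
move=> x_notO y_O; rewrite /gibbs_orbit_kernel /gorbit orbit_sym.
by rewrite -/(gorbit to y) gorbit_orbits_of // (negbTE x_notO).
Qed.

Lemma sum_pi_gibbs_orbit u :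
  \sum_(x in O) pi x * gibbs_orbit_kernel to pi x u = if u \in O then pi u else 0.
Proof.
under eq_bigr => x x_O do rewrite gibbs_orbit_kernel_orbit //.
case: ifP => u_O; last by rewrite big1 // => x _; rewrite mulr0.
rewrite -big_distrl /= -/(massOf pi O) mulrCA mulfV ?mulr1 //.
exact: massOf_orbit_neq0.
Qed.

Lemma sum_gibbs_orbit v :
  \sum_(y in O) gibbs_orbit_kernel to pi v y = if v \in O then 1 else 0.
Proof.
case: ifPn => v_O; last by rewrite big1 // => y; apply: gibbs_orbit_kernel_into_orbit.
under eq_bigr => y y_O do rewrite gibbs_orbit_kernel_orbit // y_O.
by rewrite -big_distrl /= mulfV //; exact: massOf_orbit_neq0.
Qed.

End GibbsOrbitKernel.

Theorem proposition2p4 (R : realFieldType) (X : finType) (gT : finGroupType)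
  (to : {action gT &-> X}) (pi : X -> R) (P : X -> X -> R) :
  full_pmf pi -> stochastic P -> stationary pi P ->
  forall Oi Oj : {set X}, Oi \in orbits_of to -> Oj \in orbits_of to ->
  proj_chain pi (kcomp (kcomp (gibbs_orbit_kernel to pi) P) (gibbs_orbit_kernel to pi))
    Oi Oj
  = proj_chain pi P Oi Oj.
Proof.
move=> [pi_gt0 _] _ _ Oi Oj Oi_orbit Oj_orbit; rewrite /proj_chain; congr (_ * _).
rewrite sum_block_kcomp exchange_big [RHS]big_mkcond /=; apply: eq_bigr => v _.
rewrite sum_weighted_kcomp sum_gibbs_orbit //.
case: ifP => _; last by rewrite mulr0.
rewrite mulr1 [RHS]big_mkcond /=; apply: eq_bigr => u _.
by rewrite sum_pi_gibbs_orbit //; case: ifP; rewrite ?mul0r.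
Qed.
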